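(* Let $\mathbb{F}$ be a field, let $G\le\mathrm{GL}(n,\mathbb{F})$, and let $H$ be a normal subgroup of $G$ that is unipotent-by-abelian. If $x\in\mathrm{Rad}\langle H\rangle_{\mathbb{F}}$, then there is a non-zero $G$-submodule of $\mathbb{F}^n$ contained in the nullspace of $x$.
   Context: $G$ and $x$ act on $V=\mathbb{F}^n$ by matrix multiplication (on the same side), and the nullspace of $x$ is $\{v\in V: v$ is sent to $0$ by $x\}$. A group is unipotent-by-abelian if it has a unipotent normal subgroup with abelian quotient. $\langle H\rangle_{\mathbb{F}}$ is the $\mathbb{F}$-enveloping algebra of $H$ (the $\mathbb{F}$-subalgebra of $\mathrm{Mat}(n,\mathbb{F})$ generated by $H$), and $\mathrm{Rad}$ is its Jacobson radical. *)

From HB Require Import structures.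
From mathcomp Require Import all_boot all_order all_algebra.
Set Implicit Arguments. Unset Strict Implicit. Unset Printing Implicit Defensive.
Import GRing.Theory.
Local Open Scope ring_scope.

(* Matrices act on row vectors on the right: v |-> v *m g.  Subsets of
   'M[F]_n.+1 (possibly infinite) are Prop-valued predicates. *)
Section Defs.
Variables (F : fieldType) (n : nat).
Local Notation M := 'M[F]_n.+1.

Definition is_subgroup_GL (G : M -> Prop) : Prop :=
  [/\ G 1%:M,
      (forall g, G g -> g \in unitmx),
      (forall g h, G g -> G h -> G (g *m h))
    & (forall g, G g -> G (invmx g))].

Definition is_subgroup_of (H G : M -> Prop) : Prop :=
  is_subgroup_GL H /\ (forall h, H h -> G h).

Definition is_normal_subgroup (H G : M -> Prop) : Prop :=
  is_subgroup_of H G /\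
  (forall g h, G g -> H h -> H (invmx g *m h *m g)).

Definition unipotent_mx (u : M) : Prop := exists k : nat, (u - 1%:M) ^+ k = 0.

Definition unipotent_group (U : M -> Prop) : Prop :=
  forall u, U u -> unipotent_mx u.

Definition unipotent_by_abelian (H : M -> Prop) : Prop :=
  exists U : M -> Prop,
    [/\ is_normal_subgroup U H, unipotent_group U
      & forall a b, H a -> H b -> U (a *m b *m invmx a *m invmx b)].

Definition is_subalgebra (S : M -> Prop) : Prop :=
  [/\ S 0, S 1%:M,
      (forall a b, S a -> S b -> S (a + b)),
      (forall (c : F) a, S a -> S (c *: a))
    & (forall a b, S a -> S b -> S (a *m b))].

Definition envelope (H : M -> Prop) : M -> Prop :=
  fun x => forall S : M -> Prop, is_subalgebra S -> (forall h, H h -> S h) -> S x.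

Definition is_left_ideal (A L : M -> Prop) : Prop :=
  [/\ (forall x, L x -> A x), L 0,
      (forall x y, L x -> L y -> L (x + y))
    & (forall a x, A a -> L x -> L (a *m x))].

Definition is_maximal_left_ideal (A L : M -> Prop) : Prop :=
  [/\ is_left_ideal A L,
      (exists a, A a /\ ~ L a)
    & (forall L' : M -> Prop, is_left_ideal A L' ->
         (forall x, L x -> L' x) ->
         (forall x, L' x <-> L x) \/ (forall x, L' x <-> A x))].

Definition jacobson_radical (A : M -> Prop) : M -> Prop :=
  fun x => A x /\ forall L, is_maximal_left_ideal A L -> L x.

End Defs.

From HB Require Import structures.
From mathcomp Require Import all_boot all_order all_algebra.
From Stdlib Require Import Classical Wf_nat.
From mathcomp Require Import zify.

(* The radical of A = <H>_F annihilates every simple A-submodule S of F^n: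
   otherwise the cyclic submodule generated by some s x (s in S) is all of S,
   so s = s x a with a in A, and s x (1 - a x) = 0 with 1 - a x invertible.
   As H is normal in G, conjugation by G preserves A, so every translate S g is
   again simple and killed by x.  Thus the largest G-submodule of the nullspace
   of x, {v | v g x = 0 for all g in G}, contains S and is nonzero. *)

Set Implicit Arguments.
Unset Strict Implicit.
Import GRing.Theory.
Local Open Scope ring_scope.

Lemma ex_argmin (T : Type) (P : T -> Prop) (f : T -> nat) (t0 : T) :
  P t0 -> exists2 t, P t & forall t', P t' -> (f t <= f t')%N.
Proof.
move=> Pt0.
have [k [[[t Pt <-] kmin] _]] :=
  dec_inh_nat_subset_has_unique_least_element (fun k => exists2 t, P t & f t = k)
    (fun k => classic _) (ex_intro _ (f t0) (ex_intro2 _ _ t0 Pt0 erefl)).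
by exists t => // t' Pt'; apply/leP/kmin; exists t'.
Qed.

Section Subspaces.
Variables (F : fieldType) (m n : nat).
Implicit Types (Q : 'M[F]_(m, n) -> Prop) (W : 'M[F]_(m, n)).

Lemma ex_maxmx Q W0 : Q W0 ->
  exists W, [/\ Q W, (W0 <= W)%MS & forall W', Q W' -> (W <= W')%MS -> (W' <= W)%MS].
Proof.
move=> QW0; have [W [QW sW0W] Wmax] :=
  @ex_argmin _ (fun W => Q W /\ (W0 <= W)%MS) (fun W => n - \rank W)%N W0
    (conj QW0 (submx_refl W0)).
exists W; split=> // W' QW' sWW'.
have := Wmax W' (conj QW' (submx_trans sW0W sWW')).
rewrite -(geq_leqif (mxrank_leqif_sup sWW')).
by have := rank_leq_col W'; lia.
Qed.

Lemma ex_minmx Q W0 : Q W0 ->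
  exists W, [/\ Q W, (W <= W0)%MS & forall W', Q W' -> (W' <= W)%MS -> (W <= W')%MS].
Proof.
move=> QW0; have [W [QW sWW0] Wmin] :=
  @ex_argmin _ (fun W => Q W /\ (W <= W0)%MS) (fun W => \rank W) W0
    (conj QW0 (submx_refl W0)).
exists W; split=> // W' QW' sW'W.
have := Wmin W' (conj QW' (submx_trans sW'W sWW0)).
by rewrite -(geq_leqif (mxrank_leqif_sup sW'W)).
Qed.

End Subspaces.

Lemma subspace_rowspace (F : fieldType) (m : nat) (P : 'rV[F]_m -> Prop) :
  P 0 -> (forall u v, P u -> P v -> P (u + v)) -> (forall c u, P u -> P (c *: u)) ->
  exists T : 'M[F]_m, forall v, P v <-> (v <= T)%MS.
Proof.
move=> P0 PD PZ.
have P_sub0 (v : 'rV_m) : (v <= (0 : 'M_m))%MS -> P v by rewrite submx0 => /eqP ->.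
have [T [PT _ Tmax]] :=
  @ex_maxmx F m m (fun T => forall v, (v <= T)%MS -> P v) 0 P_sub0.
exists T => v; split=> [Pv|]; last exact: PT.
suff PTv : forall w, (w <= T + v)%MS -> P w.
  exact: submx_trans (addsmxSr T v) (Tmax _ PTv (addsmxSl T v)).
move=> w /sub_addsmxP [u ->]; apply: PD; first exact/PT/submxMl.
by rewrite [u.2]mx11_scalar mul_scalar_mx; apply: PZ.
Qed.

Definition alg_stable {F : fieldType} {n : nat} (A : 'M[F]_n -> Prop) (W : 'M[F]_n) :=
  forall a, A a -> stablemx W a.

Definition alg_simple {F : fieldType} {n : nat} (A : 'M[F]_n -> Prop) (W : 'M[F]_n) :=
  [/\ W != 0, alg_stable A W
    & forall W', W' != 0 -> alg_stable A W' -> (W' <= W)%MS -> (W <= W')%MS].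

Lemma ex_alg_simple (F : fieldType) (n : nat) (A : 'M[F]_n.+1 -> Prop) :
  exists S : 'M[F]_n.+1, alg_simple A S.
Proof.
have one_neq0 : (1%:M : 'M[F]_n.+1) != 0 by rewrite -mxrank_eq0 mxrank1.
have [S [[Snz Sst] _ Smin]] := @ex_minmx F n.+1 n.+1
  (fun W => W != 0 /\ alg_stable A W) 1%:M (conj one_neq0 (fun a _ => submx1 _)).
by exists S; split=> // W Wnz Wst; apply: Smin.
Qed.

Section Conjugation.
Variables (F : fieldType) (n : nat) (A : 'M[F]_n -> Prop).

Lemma alg_stable_mulmx g W : g \in unitmx -> (forall a, A a -> A (g *m a *m invmx g)) ->
  alg_stable A W -> alg_stable A (W *m g).
Proof.
move=> gU Ag Wst a Aa.
have -> : W *m g *m a = W *m (g *m a *m invmx g) *m g by rewrite !mulmxA mulmxKV.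
exact/submxMr/Wst/Ag.
Qed.

Lemma alg_simple_mulmx g S : g \in unitmx ->
  (forall a, A a -> A (g *m a *m invmx g)) -> (forall a, A a -> A (invmx g *m a *m g)) ->
  alg_simple A S -> alg_simple A (S *m g).
Proof.
move=> gU Ag Ag' [Snz Sst Smin]; split; last move=> W Wnz Wst sWSg.
- by apply: contraNneq Snz => Sg0; rewrite -(mulmxK gU S) Sg0 mul0mx.
- exact: alg_stable_mulmx.
rewrite -(mulmxKV gU W); apply: submxMr; apply: Smin.
- by apply: contraNneq Wnz => Wg0; rewrite -(mulmxKV gU W) Wg0 mul0mx.
- by apply: alg_stable_mulmx Wst; rewrite ?unitmx_inv // => a /Ag'; rewrite invmxK.
- by rewrite -(mulmxK gU S); apply: submxMr.
Qed.

End Conjugation.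

Section Subalgebra.
Variables (F : fieldType) (n : nat).
Context {A : 'M[F]_n.+1 -> Prop}.
Hypothesis subA : is_subalgebra A.

Let subalg0 : A 0. Proof. by case: subA. Qed.
Let subalg1 : A 1%:M. Proof. by case: subA. Qed.
Let subalgD a b : A a -> A b -> A (a + b). Proof. by case: subA => _ _ + _ _; apply. Qed.
Let subalgZ c a : A a -> A (c *: a). Proof. by case: subA => _ _ _ + _; apply. Qed.
Let subalgM a b : A a -> A b -> A (a *m b). Proof. by case: subA => _ _ _ _ +; apply. Qed.
Let subalgB a b : A a -> A b -> A (a - b).
Proof. by move=> Aa Ab; rewrite -scaleN1r; apply/subalgD/subalgZ. Qed.

Lemma left_ideal_rowspace (L : 'M[F]_n.+1 -> Prop) : is_left_ideal A L ->
  exists T : 'M[F]_(n.+1 * n.+1), forall v, L (vec_mx v) <-> (v <= T)%MS.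
Proof.
case=> _ L0 LD LM; apply: subspace_rowspace => [|u v|c u].
- by rewrite linear0.
- by rewrite linearD; apply: LD.
- by rewrite linearZZ -mul_scalar_mx => Lu; apply: LM Lu; rewrite -scalemx1; apply: subalgZ.
Qed.

Lemma ex_maximal_left_ideal (L0 : 'M[F]_n.+1 -> Prop) :
  is_left_ideal A L0 -> ~ L0 1%:M ->
  exists L, is_maximal_left_ideal A L /\ forall a, L0 a -> L a.
Proof.
move=> idL0 L0_proper; have [T0 L0T0] := left_ideal_rowspace idL0.
pose proper_ext (LT : ('M[F]_n.+1 -> Prop) * 'M[F]_(n.+1 * n.+1)) :=
  [/\ is_left_ideal A LT.1, ~ LT.1 1%:M, forall a, L0 a -> LT.1 a
    & forall v, LT.1 (vec_mx v) <-> (v <= LT.2)%MS].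
have [[L T] [idL L_proper L0L LT] Tmax] :=
  @ex_argmin _ proper_ext (fun LT => n.+1 * n.+1 - \rank LT.2)%N (L0, T0)
    (And4 idL0 L0_proper (fun _ => id) L0T0).
exists L; split=> //; split=> // [|L' idL' LL'].
  by exists 1%:M; split.
have [_ _ _ L'M] := idL'.
have [L'1 | L'_proper] := classic (L' 1%:M).
  by right=> a; split=> [|Aa]; [case: idL' => + _ _ _; apply | rewrite -[a]mulmx1; apply: L'M].
left; have [T' L'T'] := left_ideal_rowspace idL'.
have sTT' : (T <= T')%MS.
  by apply/row_subP => i; apply/L'T'/LL'/LT; apply: row_sub.
have sT'T : (T' <= T)%MS.
  rewrite -(geq_leqif (mxrank_leqif_sup sTT')).
  have := Tmax (L', T') (And4 idL' L'_proper (fun a L0a => LL' a (L0L a L0a)) L'T').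
  by have := rank_leq_col T'; rewrite /=; lia.
move=> a; split=> [L'a|]; last exact: LL'.
by rewrite -[a]mxvecK; apply/LT/(submx_trans _ sT'T)/L'T'; rewrite mxvecK.
Qed.

Lemma jacobson_radical_unitmx x a :
  jacobson_radical A x -> A a -> (1%:M - a *m x) \in unitmx.
Proof.
move=> [Ax radx] Aa; apply: contraT => yNU; set y := 1%:M - a *m x.
pose L0 b := exists2 c, A c & b = c *m y.
have idL0 : is_left_ideal A L0.
  split=> [_ [c Ac ->]||_ _ [c Ac ->] [d Ad ->]|b _ Ab [c Ac ->]].
  - by apply/subalgM/subalgB/subalgM.
  - by exists 0; rewrite ?mul0mx.
  - by exists (c + d); [apply: subalgD | rewrite mulmxDl].
  - by exists (b *m c); [apply: subalgM | rewrite mulmxA].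
have L0_proper : ~ L0 1%:M.
  by case=> c _ /esym/mulmx1_unit [_ yU]; rewrite yU in yNU.
have [L [maxL L0L]] := ex_maximal_left_ideal idL0 L0_proper.
have [[_ _ LD LM] [b [Ab LNb]] _] := maxL.
suff L1 : L 1%:M by case: LNb; rewrite -[b]mulmx1; apply: LM.
rewrite -(subrK (a *m x) 1%:M); apply: LD.
  by apply: L0L; exists 1%:M; rewrite ?mul1mx.
exact: LM (radx _ maxL).
Qed.

Lemma ex_cyclic_submx (v : 'rV[F]_n.+1) : exists T : 'M[F]_n.+1,
  [/\ (v <= T)%MS, alg_stable A T & forall w, (w <= T)%MS -> exists2 a, A a & w = v *m a].
Proof.
have [T vAT] : exists T : 'M[F]_n.+1, forall w, (exists2 a, A a & w = v *m a) <-> (w <= T)%MS.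
  apply: subspace_rowspace => [|_ _ [a Aa ->] [b Ab ->]|c _ [a Aa ->]].
  - by exists 0; rewrite ?mulmx0.
  - by exists (a + b); [apply: subalgD | rewrite mulmxDr].
  - by exists (c *: a); [apply: subalgZ | rewrite scalemxAr].
exists T; split=> [||w /vAT //].
  by apply/vAT; exists 1%:M; rewrite ?mulmx1.
move=> b Ab; apply/row_subP => j; rewrite row_mul.
have [a Aa ->] := proj2 (vAT _) (row_sub j T).
by apply/vAT; exists (a *m b); [apply: subalgM | rewrite mulmxA].
Qed.

(* The radical is defined by left ideals but A acts on row vectors from the
   right; the bridge is the invertibility of 1 - a x. *)
Lemma alg_simple_mul_radical_eq0 x S :
  jacobson_radical A x -> alg_simple A S -> S *m x = 0.
Proof.
move=> radx [Snz Sst Smin]; have Ax := proj1 radx.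
apply/row_matrixP => i; rewrite row0 row_mul; set s := row i S.
apply/eqP; apply: contraT => sx_nz.
have [T [sxT Tst Tcyc]] := ex_cyclic_submx (s *m x).
have Tnz : T != 0 by apply: contraNneq sx_nz => T0; rewrite -submx0 -T0.
have TS : (T <= S)%MS.
  apply/row_subP => j; have [a Aa ->] := Tcyc _ (row_sub j T).
  by rewrite -mulmxA; apply: submx_trans (submxMr _ (row_sub i S)) (Sst _ (subalgM Ax Aa)).
have [a Aa s_eq] := Tcyc s (submx_trans (row_sub i S) (Smin T Tnz Tst TS)).
have U := jacobson_radical_unitmx radx Aa.
have sx_ker : s *m x *m (1%:M - a *m x) = 0.
  by rewrite mulmxBr mulmx1 mulmxA -s_eq subrr.
by move: sx_nz; rewrite -(mulmxK U (s *m x)) sx_ker mul0mx eqxx.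
Qed.

End Subalgebra.


Lemma envelope_subalgebra (F : fieldType) (n : nat) (H : 'M[F]_n.+1 -> Prop) :
  is_subalgebra (envelope H).
Proof.
split=> [S [] //|S [] //|a b Ea Eb|c a Ea|a b Ea Eb] S subS HS; have [_ _ SD SZ SM] := subS.
- by apply: SD; [apply: Ea | apply: Eb].
- by apply: SZ; apply: Ea.
- by apply: SM; [apply: Ea | apply: Eb].
Qed.

Lemma envelope_conj (F : fieldType) (n : nat) (H : 'M[F]_n.+1 -> Prop) g b :
  g \in unitmx -> (forall h, H h -> H (invmx g *m h *m g)) ->
  envelope H b -> envelope H (invmx g *m b *m g).
Proof.
move=> gU Hg Eb S [S0 S1 SD SZ SM] HS; apply: (Eb (fun a => S (invmx g *m a *m g))).
- split=> [||a c|c a|a c].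
  + by rewrite mulmx0 mul0mx.
  + by rewrite mulmx1 mulVmx.
  + by rewrite mulmxDr mulmxDl; apply: SD.
  + by rewrite -scalemxAr -scalemxAl; apply: SZ.
  + have -> : invmx g *m (a *m c) *m g = invmx g *m a *m g *m (invmx g *m c *m g).
      by rewrite !mulmxA mulmxK.
    exact: SM.
- by move=> h /Hg; apply: HS.
Qed.

Lemma ex_stable_submx_kermx (F : fieldType) (n : nat) (G : 'M[F]_n -> Prop) (S x : 'M[F]_n) :
  G 1%:M -> (forall g h, G g -> G h -> G (g *m h)) ->
  (forall g, G g -> S *m g *m x = 0) ->
  exists W : 'M[F]_n,
    [/\ (S <= W)%MS, forall g, G g -> (W *m g <= W)%MS & (W <= kermx x)%MS].
Proof.
move=> G1 GM SGx.
pose P (v : 'rV[F]_n) := forall g, G g -> v *m g *m x = 0.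
have [W kerW] : exists W : 'M[F]_n, forall v, P v <-> (v <= W)%MS.
  apply: subspace_rowspace => [g _|u v u0 v0 g Gg|c u u0 g Gg].
  - by rewrite !mul0mx.
  - by rewrite !mulmxDl u0 // v0 // addr0.
  - by rewrite -!scalemxAl u0 // scaler0.
have kerWrow j : forall g, G g -> row j W *m g *m x = 0 by apply/kerW/row_sub.
exists W; split.
- by apply/row_subP => i; apply/kerW => g Gg; rewrite -!row_mul SGx // row0.
- move=> g Gg; apply/row_subP => j; rewrite row_mul; apply/kerW => h Gh.
  by rewrite -(mulmxA _ g); apply: kerWrow; apply: GM.
- by apply/row_subP => j; rewrite sub_kermx -[row j W]mulmx1 kerWrow.
Qed.

Theorem lemma3p2 (F : fieldType) (n : nat) (G H : 'M[F]_n.+1 -> Prop)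
  (hG : is_subgroup_GL G) (hH : is_normal_subgroup H G)
  (hUA : unipotent_by_abelian H)
  (x : 'M[F]_n.+1) (hx : jacobson_radical (envelope H) x) :
  exists W : 'M[F]_n.+1,
    [/\ W != 0,
        (forall g, G g -> (W *m g <= W)%MS)
      & (W <= kermx x)%MS].
Proof.
have [G1 GU GM GV] := hG; have [_ Hnorm] := hH.
have subA := envelope_subalgebra H.
have conjA g : G g -> forall a, envelope H a -> envelope H (invmx g *m a *m g).
  by move=> Gg a; apply: envelope_conj (GU g Gg) _ => h; apply: Hnorm.
have [S Ssimple] := ex_alg_simple (envelope H).
have SGx g : G g -> S *m g *m x = 0.
  move=> Gg; apply: (alg_simple_mul_radical_eq0 subA hx).
  apply: alg_simple_mulmx (GU g Gg) _ (conjA g Gg) Ssimple.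
  by move=> a /(conjA _ (GV g Gg)); rewrite invmxK.
have [W [SW WG Wx]] := ex_stable_submx_kermx G1 GM SGx.
exists W; split=> //.
by case: Ssimple => Snz _ _; apply: contraNneq Snz => W0; rewrite -submx0 -W0.
Qed.
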